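(* Let $R$ be a ring with identity and $a,b,c\in R$. The following are equivalent: (i) $a$ is right $(b,c)$-invertible; (ii) ${}^\circ a\cap Rc=\{0\}$, $Rca\cap {}^\circ b=\{0\}$ and $R=abR+c^\circ$; (iii) ${}^\circ a\cap Rc=\{0\}$ and $R=abR+c^\circ$; (iv) $Rca\cap {}^\circ b=\{0\}$ and $R=abR+c^\circ$; (v) $R=abR+c^\circ$.
   Context: For $x\in R$: $xR=\{xr:r\in R\}$, $Rx=\{rx:r\in R\}$, $x^\circ=\{r: xr=0\}$, ${}^\circ x=\{r: rx=0\}$. The element $a$ is right $(b,c)$-invertible if there is $y\in R$ with $yR\subseteq bR$ and $cay=c$. *)

From mathcomp Require Import all_boot all_algebra.
Set Implicit Arguments. Unset Strict Implicit. Unset Printing Implicit Defensive.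
Import GRing.Theory.
Local Open Scope ring_scope.

Definition rmulset (R : nzRingType) (x : R) : R -> Prop := fun y => exists r, y = x * r.
Definition lmulset (R : nzRingType) (x : R) : R -> Prop := fun y => exists r, y = r * x.
Definition rann (R : nzRingType) (x : R) : R -> Prop := fun r => x * r = 0.
Definition lann (R : nzRingType) (x : R) : R -> Prop := fun r => r * x = 0.

Definition meet_zero (R : nzRingType) (S T : R -> Prop) : Prop :=
  forall x, (S x /\ T x) <-> x = 0.
Definition sum_full (R : nzRingType) (S T : R -> Prop) : Prop :=
  forall x : R, exists s t, S s /\ T t /\ x = s + t.

Definition right_bc_invertible (R : nzRingType) (a b c : R) : Prop :=
  exists y : R, (forall z, rmulset y z -> rmulset b z) /\ c * a * y = c.

From mathcomp Require Import all_boot all_algebra.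
Import GRing.Theory.
Local Open Scope ring_scope.

(** All five conditions reduce to the existence of [s] with [c a b s = c]:
    write [1 = a b s + t] with [c t = 0]. Given such an [s], [y := b s] is a
    right [(b,c)]-inverse; and if [x a = 0] with [x = r c], then
    [x = r c a b s = 0], while if [x b = 0] with [x = r c a], then
    [x = r c a b s a = 0]. *)

Section RightBCInverse.

Variables (R : nzRingType) (a b c : R).

Lemma meet_zero_intro (S T : R -> Prop) :
  S 0 -> T 0 -> (forall x, S x -> T x -> x = 0) -> meet_zero S T.
Proof. by move=> S0 T0 ST x; split=> [[]|->]; [exact: ST | ]. Qed.

Lemma lmulset0 (x : R) : lmulset x 0.
Proof. by exists 0; rewrite mul0r. Qed.

Lemma right_bc_invertibleP :
  right_bc_invertible a b c <-> exists s, c * a * b * s = c.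
Proof.
split=> [[y [yRbR cay]] | [s cabs]].
  have [s ybs] := yRbR y (ex_intro _ 1 (esym (mulr1 y))).
  by exists s; rewrite -mulrA -ybs.
exists (b * s); split; last by rewrite mulrA.
by move=> z [q ->]; exists (s * q); rewrite mulrA.
Qed.

Lemma sum_full_abR_rannP :
  sum_full (rmulset (a * b)) (rann c) <-> exists s, c * a * b * s = c.
Proof.
split=> [full | [s cabs] x].
  have [_ [t [[s ->] [ct0 one_eq]]]] := full 1.
  exists s; have := congr1 (GRing.mul c) one_eq.
  by rewrite mulr1 mulrDr ct0 addr0 !mulrA => {2}->.
exists (a * b * (s * x)), (x - a * b * (s * x)); split; first by exists (s * x).
split; last by rewrite addrC subrK.
by rewrite /rann mulrBr !mulrA cabs subrr.
Qed.

Hypothesis cabs_eq : exists s, c * a * b * s = c.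

Lemma lann_meet_lmulset : meet_zero (lann a) (lmulset c).
Proof.
have [s cabs] := cabs_eq.
apply: meet_zero_intro; [exact: mul0r | exact: lmulset0 |].
move=> x xa0 [r xrc]; rewrite /lann in xa0.
by rewrite xrc -cabs !mulrA -xrc xa0 !mul0r.
Qed.

Lemma lmulset_meet_lann : meet_zero (lmulset (c * a)) (lann b).
Proof.
have [s cabs] := cabs_eq.
apply: meet_zero_intro; [exact: lmulset0 | exact: mul0r |].
move=> x [r xrca] xb0; rewrite /lann in xb0.
by rewrite xrca -{1}cabs !mulrA -(mulrA r c a) -xrca xb0 !mul0r.
Qed.

End RightBCInverse.

Theorem theorem2p14 (R : nzRingType) (a b c : R) :
  let i   := right_bc_invertible a b c in
  let ii  := [/\ meet_zero (lann a) (lmulset c),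
                 meet_zero (lmulset (c * a)) (lann b)
               & sum_full (rmulset (a * b)) (rann c)] in
  let iii := meet_zero (lann a) (lmulset c) /\ sum_full (rmulset (a * b)) (rann c) in
  let iv  := meet_zero (lmulset (c * a)) (lann b) /\ sum_full (rmulset (a * b)) (rann c) in
  let v   := sum_full (rmulset (a * b)) (rann c) in
  [/\ (i <-> ii), (ii <-> iii), (iii <-> iv) & (iv <-> v)].
Proof.
move=> i ii iii iv v.
have v_i : v <-> i.
  by split=> [/sum_full_abR_rannP/right_bc_invertibleP | /right_bc_invertibleP/sum_full_abR_rannP].
have v_ii : v -> ii.
  move=> full; have /sum_full_abR_rannP cabs := full.
  by rewrite /ii; split; [exact: (lann_meet_lmulset _ _ b) | exact: lmulset_meet_lann |].
have ii_v : ii -> v by case.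
split; split.
- by move/v_i/v_ii.
- by move/ii_v/v_i.
- by case.
- by case=> _ /v_ii.
- by case=> _ /v_ii [].
- by case=> _ /v_ii [].
- by case.
- by case/v_ii.
Qed.
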